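(* Let $N=\{1,\dots,n\}$, let $C:2^N\to\mathbb{R}_{\ge0}$ with $C(\emptyset)=0$ and $\max_S C(S)$ bounded by a polynomial in $n$, and let $\mathcal{D}$ be a bounded product distribution on $2^N$. For $i\in N$ let $v_i=\mathbb{E}_{S\sim\mathcal{D}\mid i\notin S}[C(S\cup\{i\})-C(S)]$. Given samples $(S_j,C(S_j))$, $S_j$ i.i.d. from $\mathcal{D}$, let $\mathcal{S}_i$ (resp. $\mathcal{S}_{-i}$) be the collection of samples containing (resp. not containing) $i$, let $\mathrm{avg}(\mathcal{S})=\frac{1}{|\mathcal{S}|}\sum_{S\in\mathcal{S}}C(S)$, and $\tilde v_i=\mathrm{avg}(\mathcal{S}_i)-\mathrm{avg}(\mathcal{S}_{-i})$. Then for all $i\in N$ and any $\delta>0$, given $\mathrm{poly}(n,1/\delta,1/\epsilon)$ samples, with probability at least $1-\delta$: if $v_i\ge1/\mathrm{poly}(n)$ then $(1-\epsilon)v_i\le\tilde v_i\le(1+\epsilon)v_i$; if $|v_i|<1/\mathrm{poly}(n)$ then $|v_i-\tilde v_i|\le\epsilon$; if $v_i\le-1/\mathrm{poly}(n)$ then $(1+\epsilon)v_i\le\tilde v_i\le(1-\epsilon)v_i$.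
   Context: A bounded product distribution on $2^N$ includes each element independently, with marginal probabilities between $1/\mathrm{poly}(n)$ and $1-1/\mathrm{poly}(n)$. *)

From HB Require Import structures.
From mathcomp Require Import all_boot all_order all_algebra.
From mathcomp Require Import reals.
Set Implicit Arguments. Unset Strict Implicit. Unset Printing Implicit Defensive.
Import Order.TTheory GRing.Theory Num.Theory.
Local Open Scope ring_scope.

Section Defs.
Variable R : realType.
Variable n : nat.

Definition prodD (p : 'I_n -> R) (S : {set 'I_n}) : R :=
  \prod_(j in S) p j * \prod_(j in ~: S) (1 - p j).

Definition bounded_marginals (a : nat) (p : 'I_n -> R) : Prop :=
  forall j, ((n.+1)%:R ^+ a)^-1 <= p j <= 1 - ((n.+1)%:R ^+ a)^-1.

Definition marg_val (p : 'I_n -> R) (C : {set 'I_n} -> R) (i : 'I_n) : R :=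
  (\sum_(S : {set 'I_n} | i \notin S) prodD p S * (C (i |: S) - C S))
  / (\sum_(S : {set 'I_n} | i \notin S) prodD p S).

Definition sampleP (m : nat) (p : 'I_n -> R) (s : {ffun 'I_m -> {set 'I_n}}) : R :=
  \prod_(j < m) prodD p (s j).

Definition probE (m : nat) (p : 'I_n -> R) (E : pred {ffun 'I_m -> {set 'I_n}}) : R :=
  \sum_(s | E s) sampleP p s.

(* average of C over the samples (with multiplicity) satisfying P;
   0 if there are none (x / 0 = 0 in MathComp) *)
Definition avg_samples (m : nat) (C : {set 'I_n} -> R)
    (s : {ffun 'I_m -> {set 'I_n}}) (P : pred {set 'I_n}) : R :=
  (\sum_(j < m | P (s j)) C (s j)) / (#|[set j : 'I_m | P (s j)]|)%:R.

Definition est_val (m : nat) (C : {set 'I_n} -> R)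
    (s : {ffun 'I_m -> {set 'I_n}}) (i : 'I_n) : R :=
  avg_samples C s (fun S => i \in S) - avg_samples C s (fun S => i \notin S).

End Defs.

From HB Require Import structures.
From mathcomp Require Import all_boot all_order all_algebra.
From mathcomp Require Import reals ring lra.
Import Order.TTheory GRing.Theory Num.Theory.
Local Open Scope ring_scope.
Set Implicit Arguments. Unset Strict Implicit. Unset Printing Implicit Defensive.

(* By the product structure, S |-> i |: S maps the event i \notin S onto
   i \in S and rescales probabilities by p_i / (1 - p_i), so v_i = mu1 - mu0
   is the difference of the conditional means of C given i \in S and given
   i \notin S.  For each of the two classes, Chebyshev's inequality applied to
   two sums of m i.i.d. centred bounded variables, the class indicator and
   C - mu restricted to the class, shows that with probability
   1 - O((1 + (B/tol)^2) / (m L^2)) the class has more than m L / 2 samples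
   and its total is within tol m L / 2 of mu times that count, so its average
   is within tol of mu; here L = 1/(n+1)^a bounds the class probabilities from
   below and B = (n+1)^b bounds C.  An additive error eps / (n+1)^c on v_i
   yields all three guarantees, and polynomially many samples push the
   failure probability below delta. *)

Lemma big_setU1_mem (T : finType) (V : nmodType) (i : T) (g : {set T} -> V) :
  \sum_(A : {set T} | i \in A) g A = \sum_(A : {set T} | i \notin A) g (i |: A).
Proof.
rewrite (reindex_onto (fun A => i |: A) (fun A => A :\ i)); last exact: setD1K.
apply: eq_bigl => A; rewrite setU11 /=.
have [iA | iA] := boolP (i \in A); last by rewrite setU1K // eqxx.
by apply/negbTE/eqP => defA; move: iA; rewrite -defA setD11.
Qed.

Lemma natr_card_set (R : pzSemiRingType) (I : finType) (P : pred I) :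
  #|[set j | P j]|%:R = \sum_j (P j)%:R :> R.
Proof.
rewrite -sumr_const [LHS]big_mkcond; apply: eq_bigr => j _.
by rewrite inE; case: (P j).
Qed.

Section ProductDistribution.
Variables (R : realType) (n : nat) (p : 'I_n -> R).

Lemma prodDE S : prodD p S = \prod_j (if j \in S then p j else 1 - p j).
Proof.
rewrite /prodD (big_mkcond (mem S)) (big_mkcond (mem (~: S))) -big_split /=.
by apply: eq_bigr => j _; rewrite inE; case: (j \in S); rewrite ?mulr1 ?mul1r.
Qed.

Lemma sum_set_prod (F : 'I_n -> bool -> R) :
  \sum_(S : {set 'I_n}) \prod_j F j (j \in S) = \prod_j (F j true + F j false).
Proof.
under [RHS]eq_bigr do rewrite -big_bool.
rewrite bigA_distr_bigA /= (reindex (fun g : {ffun 'I_n -> bool} => [set j | g j])).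
  by apply: eq_bigr => g _; apply: eq_bigr => j _; rewrite inE.
exists (fun S : {set 'I_n} => [ffun j => j \in S]) => [g _ | S _].
  by apply/ffunP => j; rewrite ffunE inE.
by apply/setP => j; rewrite inE ffunE.
Qed.

Lemma prodD_sum1 : \sum_(S : {set 'I_n}) prodD p S = 1.
Proof.
under eq_bigr do rewrite prodDE.
rewrite (sum_set_prod (fun j b => if b then p j else 1 - p j)).
by rewrite big1 // => j _; rewrite addrC subrK.
Qed.

Lemma sum_prodD_mem (i : 'I_n) (h : bool -> R) :
  \sum_(S : {set 'I_n}) prodD p S * h (i \in S) = p i * h true + (1 - p i) * h false.
Proof.
pose F j (b : bool) := (if b then p j else 1 - p j) * (if j == i then h b else 1).
have splitF S : prodD p S * h (i \in S) = \prod_j F j (j \in S).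
  rewrite prodDE big_split /= [X in _ = _ * X](bigD1 i) //= eqxx.
  by rewrite [X in _ = _ * (_ * X)]big1 ?mulr1 // => j /negPf ->.
under eq_bigr do rewrite splitF.
rewrite sum_set_prod (bigD1 i) //= big1 ?mulr1 /F ?eqxx //.
by move=> j /negPf ->; rewrite !mulr1 addrC subrK.
Qed.

Definition probD (Q : pred {set 'I_n}) : R := \sum_(S | Q S) prodD p S.

Lemma probDE Q : probD Q = \sum_(S : {set 'I_n}) prodD p S * (Q S)%:R.
Proof.
by rewrite /probD big_mkcond; apply: eq_bigr => S _; case: (Q S); rewrite ?mulr1 ?mulr0.
Qed.

Lemma probD_mem i : probD (fun S => i \in S) = p i.
Proof. by rewrite probDE (sum_prodD_mem i (fun b => b%:R)) mulr1 mulr0 addr0. Qed.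

Lemma probD_notin i : probD (fun S => i \notin S) = 1 - p i.
Proof. by rewrite probDE (sum_prodD_mem i (fun b => (~~ b)%:R)) mulr1 mulr0 add0r. Qed.

Definition cond_mean (C : {set 'I_n} -> R) (Q : pred {set 'I_n}) : R :=
  (\sum_(S | Q S) prodD p S * C S) / probD Q.

Lemma sum_prodD_restriction_centered C Q : probD Q != 0 ->
  \sum_(S : {set 'I_n}) prodD p S * ((Q S)%:R * (C S - cond_mean C Q)) = 0.
Proof.
move=> w_neq0; transitivity (\sum_(S | Q S) prodD p S * C S - cond_mean C Q * probD Q).
  rewrite probDE mulr_sumr (big_mkcond Q) -sumrB; apply: eq_bigr => S _.
  by case: (Q S) => /=; ring.
by rewrite divfK // subrr.
Qed.

Lemma sum_prodD_indicator_centered (Q : pred {set 'I_n}) :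
  \sum_(S : {set 'I_n}) prodD p S * ((Q S)%:R - probD Q) = 0.
Proof.
under eq_bigr do rewrite mulrBr.
by rewrite sumrB -probDE -mulr_suml prodD_sum1 mul1r subrr.
Qed.

Lemma prodD_setU1 i (S : {set 'I_n}) :
  i \notin S -> prodD p (i |: S) * (1 - p i) = prodD p S * p i.
Proof.
move=> iS; rewrite !prodDE (bigD1 i) //= [in RHS](bigD1 i) //= setU11 (negPf iS).
rewrite (eq_bigr (fun j => if j \in S then p j else 1 - p j)); first by ring.
by move=> j /negPf ji; rewrite in_setU1 ji.
Qed.

Lemma marg_valE C i : 0 < p i < 1 ->
  marg_val p C i = cond_mean C (fun S => i \in S) - cond_mean C (fun S => i \notin S).
Proof.
case/andP=> p_gt0 p_lt1; rewrite /marg_val /cond_mean probD_mem probD_notin.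
have -> : \sum_(S : {set 'I_n} | i \notin S) prodD p S = 1 - p i by apply: probD_notin.
have shift : \sum_(S : {set 'I_n} | i \notin S) prodD p S * C (i |: S)
    = (1 - p i) / p i * \sum_(S : {set 'I_n} | i \in S) prodD p S * C S.
  rewrite big_setU1_mem mulr_sumr; apply: eq_bigr => S iS.
  rewrite mulrA; congr (_ * _).
  by rewrite mulrC mulrA prodD_setU1 // mulfK // gt_eqF.
under eq_bigr do rewrite mulrBr; rewrite sumrB shift.
by field; rewrite subr_eq0 !gt_eqF.
Qed.

Hypothesis p01 : forall j, 0 <= p j <= 1.

Lemma prodD_ge0 S : 0 <= prodD p S.
Proof.
rewrite prodDE; apply: prodr_ge0 => j _.
by have /andP[? ?] := p01 j; case: (j \in S); lra.
Qed.

Lemma probD_le1 Q : probD Q <= 1.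
Proof.
rewrite -prodD_sum1 /probD [X in _ <= X](bigID Q) /= lerDl.
exact/sumr_ge0/(fun S _ => prodD_ge0 S).
Qed.

Lemma cond_mean_bounds C B Q : (forall S, 0 <= C S <= B) -> 0 < probD Q ->
  0 <= cond_mean C Q <= B.
Proof.
move=> C_bnd w_gt0; rewrite /cond_mean ler_pdivrMr // divr_ge0 ?(ltW w_gt0) //=.
  rewrite /probD mulr_sumr; apply: ler_sum => S _.
  by rewrite mulrC ler_wpM2r ?prodD_ge0 //; case/andP: (C_bnd S).
by apply: sumr_ge0 => S _; rewrite mulr_ge0 ?prodD_ge0 //; case/andP: (C_bnd S).
Qed.

End ProductDistribution.

Section Sampling.
Variables (R : realType) (n m : nat) (p : 'I_n -> R).
Hypothesis p01 : forall j, 0 <= p j <= 1.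

Local Notation sample := {ffun 'I_m -> {set 'I_n}}.

Lemma sampleP_ge0 (s : sample) : 0 <= sampleP p s.
Proof. by apply: prodr_ge0 => j _; apply: prodD_ge0. Qed.

Lemma sampleP_prod (G : 'I_m -> {set 'I_n} -> R) :
  \sum_(s : sample) sampleP p s * \prod_j G j (s j)
  = \prod_j \sum_(S : {set 'I_n}) prodD p S * G j S.
Proof.
rewrite bigA_distr_bigA /=; apply: eq_bigr => s _.
by rewrite /sampleP -big_split.
Qed.

Lemma sampleP_sum1 : \sum_(s : sample) sampleP p s = 1.
Proof.
transitivity (\prod_(j < m) \sum_(S : {set 'I_n}) prodD p S * 1).
  by rewrite -sampleP_prod; apply: eq_bigr => s _; rewrite big1 ?mulr1.
by apply: big1 => j _; under eq_bigr do rewrite mulr1; apply: prodD_sum1.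
Qed.

Lemma sampleP_mul_mean0 (Y : {set 'I_n} -> R) (j k : 'I_m) :
  \sum_(S : {set 'I_n}) prodD p S * Y S = 0 -> j != k ->
  \sum_(s : sample) sampleP p s * (Y (s j) * Y (s k)) = 0.
Proof.
move=> Y_mean0 jk; pose G l S := if (l == j) || (l == k) then Y S else 1.
have GE s : Y (s j) * Y (s k) = \prod_l G l (s l).
  rewrite (bigD1 j) // (bigD1 k) 1?eq_sym //= big1 => [|l /andP[/negPf lj /negPf lk]].
    by rewrite /G !eqxx orbT mulr1.
  by rewrite /G lj lk.
under eq_bigr do rewrite GE; rewrite sampleP_prod (bigD1 j) //=.
by rewrite [X in X * _](_ : _ = 0) ?mul0r // -[RHS]Y_mean0 /G eqxx.
Qed.

Lemma sampleP_sum_sqr (Y : {set 'I_n} -> R) (B : R) :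
  \sum_(S : {set 'I_n}) prodD p S * Y S = 0 -> (forall S, Y S ^+ 2 <= B) ->
  \sum_(s : sample) sampleP p s * (\sum_j Y (s j)) ^+ 2 <= m%:R * B.
Proof.
move=> Y_mean0 Y_bnd.
have -> : \sum_(s : sample) sampleP p s * (\sum_j Y (s j)) ^+ 2 =
    \sum_(j < m) \sum_(k < m) \sum_(s : sample) sampleP p s * (Y (s j) * Y (s k)).
  under [RHS]eq_bigr do rewrite exchange_big; rewrite exchange_big.
  apply: eq_bigr => s _; rewrite expr2 mulr_suml mulr_sumr.
  by apply: eq_bigr => j _; rewrite !mulr_sumr; apply: eq_bigr => k _; ring.
rewrite mulr_natl -[in X in _ <= _ *+ X](card_ord m) -sumr_const.
apply: ler_sum => j _; rewrite (bigD1 j) //= [X in _ + X]big1 ?addr0 => [|k kj].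
  rewrite -[leRHS]mul1r -sampleP_sum1 mulr_suml.
  by apply: ler_sum => s _; rewrite -expr2 ler_wpM2l ?sampleP_ge0.
by apply: sampleP_mul_mean0; rewrite // eq_sym.
Qed.

Lemma probE_mono (E F : pred sample) :
  (forall s, E s -> F s) -> probE p E <= probE p F.
Proof.
move=> EF; rewrite /probE (big_mkcond E) (big_mkcond F); apply: ler_sum => s _.
have [/EF -> | _] := boolP (E s); first exact: lexx.
by case: (F s); rewrite ?sampleP_ge0.
Qed.

Lemma probE_union (E F : pred sample) :
  probE p (fun s => E s || F s) <= probE p E + probE p F.
Proof.
rewrite /probE (big_mkcond (fun s => E s || F s)) (big_mkcond E) (big_mkcond F).
rewrite -big_split; apply: ler_sum => s _.
by have := sampleP_ge0 s; case: (E s); case: (F s) => /=; lra.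
Qed.

Lemma probE_compl (E : pred sample) : probE p E = 1 - probE p (fun s => ~~ E s).
Proof. by rewrite /probE -sampleP_sum1 (bigID E predT) /= addrK. Qed.

Lemma probE_chebyshev (Y : {set 'I_n} -> R) (B t : R) :
  \sum_(S : {set 'I_n}) prodD p S * Y S = 0 -> (forall S, Y S ^+ 2 <= B) -> 0 < t ->
  probE p (fun s : sample => t <= `|\sum_j Y (s j)|) <= m%:R * B / t ^+ 2.
Proof.
move=> Y_mean0 Y_bnd t_gt0; have t2_gt0 : 0 < t ^+ 2 by rewrite exprn_gt0.
rewrite ler_pdivlMr // /probE mulr_suml.
apply: le_trans (sampleP_sum_sqr Y_mean0 Y_bnd); rewrite big_mkcond /=.
apply: ler_sum => s _; case: ifP => [dev | _]; last first.
  by rewrite mulr_ge0 ?sqr_ge0 ?sampleP_ge0.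
rewrite ler_wpM2l ?sampleP_ge0 // -[leRHS]real_normK ?num_real //.
by rewrite ler_sqr ?nnegrE ?normr_ge0 ?(ltW t_gt0).
Qed.

Lemma sum_indicator_samples (s : sample) (Q : pred {set 'I_n}) (w : R) :
  \sum_j ((Q (s j))%:R - w) = #|[set j | Q (s j)]|%:R - m%:R * w.
Proof. by rewrite sumrB sumr_const card_ord mulr_natl natr_card_set. Qed.

Lemma sum_restriction_samples (s : sample) (Q : pred {set 'I_n}) C (mu : R) :
  \sum_j ((Q (s j))%:R * (C (s j) - mu))
  = \sum_(j | Q (s j)) C (s j) - mu * #|[set j | Q (s j)]|%:R.
Proof.
rewrite natr_card_set mulr_sumr (big_mkcond (fun j => Q (s j))) -sumrB.
by apply: eq_bigr => j _; case: (Q (s j)) => /=; ring.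
Qed.

End Sampling.

Lemma ratio_dev_lt (R : realFieldType) (N T mu l tol : R) :
  0 < l -> l <= N -> `|T - mu * N| < tol * l -> `|T / N - mu| < tol.
Proof.
move=> l_gt0 lN dev; have N_gt0 : 0 < N := lt_le_trans l_gt0 lN.
have -> : T / N - mu = (T - mu * N) / N by field; rewrite gt_eqF.
rewrite normrM normfV (gtr0_norm N_gt0) ltr_pdivrMr //.
have tol_ge0 : 0 <= tol.
  by rewrite -(pmulr_lge0 _ l_gt0) ltW // (le_lt_trans (normr_ge0 _) dev).
by apply: lt_le_trans dev _; rewrite ler_wpM2l.
Qed.

Section Estimation.
Variables (R : realType) (n m : nat) (p : 'I_n -> R) (C : {set 'I_n} -> R) (B : R).
Hypothesis p01 : forall j, 0 <= p j <= 1.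
Hypothesis C_bnd : forall S, 0 <= C S <= B.
Hypothesis m_gt0 : (0 < m)%N.

Lemma avg_samples_dev (Q : pred {set 'I_n}) (tol L : R) :
  0 < tol -> 0 < L -> L <= probD p Q ->
  probE p (fun s : {ffun 'I_m -> {set 'I_n}} =>
             tol <= `|avg_samples C s Q - cond_mean p C Q|)
  <= (4 + 4 * (B / tol) ^+ 2) / (m%:R * L ^+ 2).
Proof.
move=> tol_gt0 L_gt0 Lw.
set w := probD p Q; set mu := cond_mean p C Q; set l := m%:R * L / 2.
have mR_gt0 : 0 < m%:R :> R by rewrite ltr0n.
have l_gt0 : 0 < l by rewrite divr_gt0 ?mulr_gt0.
have w_gt0 : 0 < w := lt_le_trans L_gt0 Lw.
have /andP[mu_ge0 mu_leB] : 0 <= mu <= B by apply: cond_mean_bounds.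
pose Z S := (Q S)%:R - w; pose Y S := (Q S)%:R * (C S - mu).
have Z_bnd S : Z S ^+ 2 <= 1.
  have := probD_le1 p01 Q; rewrite /Z -/w expr2; case: (Q S) => /=; nra.
have Y_bnd S : Y S ^+ 2 <= B ^+ 2.
  have /andP[? ?] := C_bnd S; rewrite /Y !expr2; case: (Q S) => /=; nra.
have devZ := probE_chebyshev m p01 (sum_prodD_indicator_centered p Q) Z_bnd l_gt0.
have devY := probE_chebyshev m p01 (sum_prodD_restriction_centered C (lt0r_neq0 w_gt0))
  Y_bnd (mulr_gt0 tol_gt0 l_gt0).
apply: le_trans (probE_mono p01 (F := fun s =>
  (l <= `|\sum_j Z (s j)|) || (tol * l <= `|\sum_j Y (s j)|)) _) _; last first.
  apply: le_trans (probE_union p01 _ _) _.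
  rewrite [leRHS](_ : _ = m%:R * 1 / l ^+ 2 + m%:R * B ^+ 2 / (tol * l) ^+ 2).
    exact: lerD.
  by rewrite /l; field; rewrite ?lt0r_neq0.
move=> s; apply: contraTT; rewrite negb_or -!ltNge.
rewrite sum_indicator_samples sum_restriction_samples => /andP[countZ totY].
apply: ratio_dev_lt l_gt0 _ totY.
have mLw : m%:R * L <= m%:R * w by rewrite ler_pM2l.
by move: countZ; rewrite ltr_norml /l; lra.
Qed.

Lemma est_val_dev (i : 'I_n) (eta L : R) :
  0 < eta -> 0 < L -> L <= p i <= 1 - L ->
  probE p (fun s : {ffun 'I_m -> {set 'I_n}} =>
             eta <= `|est_val C s i - marg_val p C i|)
  <= (8 + 32 * (B / eta) ^+ 2) / (m%:R * L ^+ 2).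
Proof.
move=> eta_gt0 L_gt0 /andP[Lp Lq]; have tol_gt0 : 0 < eta / 2 by rewrite divr_gt0.
rewrite marg_valE; last by apply/andP; split; lra.
set in_i := fun S : {set 'I_n} => i \in S.
set out_i := fun S : {set 'I_n} => i \notin S.
have w1 : L <= probD p in_i by rewrite /in_i probD_mem.
have w0 : L <= probD p out_i by rewrite /out_i probD_notin; lra.
apply: le_trans (probE_mono p01 (F := fun s =>
  (eta / 2 <= `|avg_samples C s in_i - cond_mean p C in_i|) ||
  (eta / 2 <= `|avg_samples C s out_i - cond_mean p C out_i|)) _) _.
  move=> s; apply: contraTT; rewrite negb_or -!ltNge => /andP[close1 close0].
  rewrite /est_val -/in_i -/out_i.
  set a1 := avg_samples _ _ _ in close1 *; set a0 := avg_samples _ _ _ in close0 *.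
  set mu1 := cond_mean _ _ _ in close1 *; set mu0 := cond_mean _ _ _ in close0 *.
  have -> : a1 - a0 - (mu1 - mu0) = (a1 - mu1) - (a0 - mu0) by ring.
  by apply: le_lt_trans (ler_normB _ _) _; lra.
apply: le_trans (probE_union p01 _ _) _.
rewrite [leRHS](_ : _ = (4 + 4 * (B / (eta / 2)) ^+ 2) / (m%:R * L ^+ 2)
                     + (4 + 4 * (B / (eta / 2)) ^+ 2) / (m%:R * L ^+ 2)).
  exact: lerD (avg_samples_dev tol_gt0 L_gt0 w1) (avg_samples_dev tol_gt0 L_gt0 w0).
by field; rewrite !lt0r_neq0 // ltr0n.
Qed.

End Estimation.

Lemma expr_mul_ge (R : realFieldType) (X D E : R) (k : nat) :
  2 <= X -> 1 <= D -> 1 <= E -> 8 * X ^+ k * D * E <= (X * D * E) ^+ (k + 3).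
Proof.
move=> X2 D1 E1; set M := X * D * E; have X_ge0 : 0 <= X by lra.
have X_le_M : X <= M by rewrite /M -mulrA ler_peMr // mulr_ege1.
have Mk : X ^+ k <= M ^+ k.
  by apply: (@lerXn2r _ k X M); rewrite ?nnegrE // (le_trans X_ge0 X_le_M).
have M3 : 8 * D * E <= M ^+ 3.
  have X3 : 8 <= X ^+ 3 by rewrite !exprS expr0 mulr1; nra.
  have D3 : D <= D ^+ 3 by apply: ler_eXnr.
  have E3 : E <= E ^+ 3 by apply: ler_eXnr.
  by rewrite /M !exprMn; apply: ler_pM; try apply: ler_pM; lra.
rewrite exprD [leLHS](_ : _ = X ^+ k * (8 * D * E)); last by ring.
by apply: ler_pM Mk M3; rewrite ?exprn_ge0 ?mulr_ge0 //; lra.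
Qed.

Lemma sample_size_ge (R : realFieldType) (X D E : R) (a b c : nat) :
  2 <= X -> 1 <= D -> 1 <= E ->
  64 * (X ^+ a * X ^+ b * X ^+ c) ^+ 2 * D ^+ 2 * E ^+ 2
  <= (X * D * E) ^+ ((a + b + c + 3) * 2).
Proof.
move=> X2 D1 E1; rewrite exprM.
have := expr_mul_ge (a + b + c) X2 D1 E1; rewrite !(exprD X).
set T := _ * _ * X ^+ c => M_ge.
have TDE_ge0 : 0 <= 8 * T * D * E by rewrite !mulr_ge0 ?exprn_ge0 //; lra.
rewrite [leLHS](_ : _ = (8 * T * D * E) ^+ 2); last by ring.
by rewrite ler_sqr ?nnegrE // (le_trans TDE_ge0).
Qed.

Lemma sample_budget (R : realFieldType) (X d e m : R) (a b c : nat) :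
  2 <= X -> 0 < d -> 0 < e ->
  (X * (1 + d^-1) * (1 + e^-1)) ^+ ((a + b + c + 3) * 2) <= m ->
  (8 + 32 * (X ^+ b / (e * (X ^+ c)^-1)) ^+ 2) / (m * ((X ^+ a)^-1) ^+ 2) <= d.
Proof.
move=> X2 d_gt0 e_gt0 m_large; have X1 : 1 <= X by lra.
set u := e^-1; set D := 1 + d^-1; set E := 1 + u.
have u_gt0 : 0 < u by rewrite invr_gt0.
have D1 : 1 <= D by rewrite lerDl invr_ge0 ltW.
have E1 : 1 <= E by rewrite lerDl ltW.
have xa1 := exprn_ege1 a X1; have xb1 := exprn_ege1 b X1; have xc1 := exprn_ege1 c X1.
set xa := X ^+ a in xa1 *; set xb := X ^+ b in xb1 *; set xc := X ^+ c in xc1 *.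
set T := xa * xb * xc.
have T_ge : xa <= T by rewrite /T -mulrA ler_peMr ?mulr_ege1 //; lra.
have T2 : xa ^+ 2 <= T ^+ 2 by rewrite ler_sqr ?nnegrE; lra.
have dD2 : 1 <= d * D ^+ 2.
  have dD : d * D = d + 1 by rewrite /D mulrDr mulr1 divff ?lt0r_neq0.
  by rewrite expr2 mulrA dD; apply: mulr_ege1; lra.
have E2 : 1 + u ^+ 2 <= E ^+ 2 by rewrite /E !expr2; nra.
have m_ge := le_trans (sample_size_ge a b c X2 D1 E1) m_large.
have m_gt0 : 0 < m by apply: lt_le_trans m_ge; rewrite !mulr_gt0 ?exprn_gt0; lra.
rewrite [leLHS](_ : _ = (8 * xa ^+ 2 + 32 * T ^+ 2 * u ^+ 2) / m); last first.
  by rewrite /T /u; field; rewrite !lt0r_neq0 //; lra.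
rewrite ler_pdivrMr //.
have dm_ge : d * (64 * T ^+ 2 * D ^+ 2 * E ^+ 2) <= d * m by rewrite ler_pM2l.
apply: le_trans dm_ge.
rewrite [leRHS](_ : _ = 64 * T ^+ 2 * ((d * D ^+ 2) * E ^+ 2)); last by ring.
set t := T ^+ 2 in T2 *; set y := d * D ^+ 2 in dD2 *; set z := E ^+ 2 in E2 *.
have t_ge0 : 0 <= t by rewrite exprn_ge0 // /T !mulr_ge0; lra.
have yz : 1 + u ^+ 2 <= y * z.
  by rewrite -[leLHS]mul1r ler_pM // ?addr_ge0 ?exprn_ge0; lra.
have := ler_wpM2l t_ge0 yz; nra.
Qed.

Lemma additive_error_guarantees (R : realFieldType) (v vt eps thr : R) :
  0 < eps -> 0 < thr <= 1 -> `|vt - v| < eps * thr ->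
  [&& (thr <= v) ==> ((1 - eps) * v <= vt <= (1 + eps) * v),
      (`|v| < thr) ==> (`|v - vt| <= eps)
    & (v <= - thr) ==> ((1 + eps) * v <= vt <= (1 - eps) * v)].
Proof.
move=> eps_gt0 /andP[thr_gt0 thr_le1]; rewrite ltr_norml => /andP[lo hi].
have err_le : eps * thr <= eps by rewrite ler_piMr // ltW.
apply/and3P; split; apply/implyP => v_bnd.
- have : eps * thr <= eps * v by rewrite ler_pM2l.
  by move=> ?; apply/andP; split; lra.
- by rewrite distrC ler_norml; apply/andP; split; lra.
- have : eps * thr <= eps * - v by rewrite ler_pM2l // lerNr.
  by move=> ?; apply/andP; split; lra.
Qed.

Unset Implicit Arguments.
Theorem lemma11 (R : realType) (a b c : nat) :
  exists K : nat,
  forall (n : nat) (p : 'I_n -> R) (C : {set 'I_n} -> R),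
    bounded_marginals a p ->
    (forall S, 0 <= C S) -> C set0 = 0 ->
    (forall S, C S <= (n.+1)%:R ^+ b) ->
  forall (i : 'I_n) (delta eps : R), 0 < delta -> 0 < eps ->
  forall m : nat,
    ((n.+1)%:R * (1 + delta^-1) * (1 + eps^-1)) ^+ K <= m%:R ->
    let v := marg_val p C i in
    let thr := ((n.+1)%:R ^+ c)^-1 in
    1 - delta <= probE p (fun s : {ffun 'I_m -> {set 'I_n}} =>
      let vt := est_val C s i in
      [&& (thr <= v) ==> ((1 - eps) * v <= vt <= (1 + eps) * v),
          (`|v| < thr) ==> (`|v - vt| <= eps)
        & (v <= - thr) ==> ((1 + eps) * v <= vt <= (1 - eps) * v)]).
Proof.
exists ((a + b + c + 3) * 2)%N.
move=> n p C p_bnd C_ge0 _ C_le i delta eps delta_gt0 eps_gt0 m m_large; cbv zeta.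
set thr := ((n.+1)%:R ^+ c)^-1.
have X2 : 2 <= (n.+1)%:R :> R by rewrite ler_nat ltnS (leq_ltn_trans (leq0n i)).
have L_gt0 : 0 < ((n.+1)%:R ^+ a)^-1 :> R by rewrite invr_gt0 exprn_gt0 //; lra.
have p01 j : 0 <= p j <= 1 by have /andP[? ?] := p_bnd j; apply/andP; split; lra.
have C_bnd S : 0 <= C S <= (n.+1)%:R ^+ b by rewrite C_ge0 C_le.
have thr_bnd : 0 < thr <= 1.
  by rewrite invr_gt0 invf_le1 ?exprn_gt0 ?exprn_ege1 //; lra.
have m_gt0 : (0 < m)%N.
  rewrite -(ltr0n R); apply: lt_le_trans m_large.
  by rewrite exprn_gt0 // !mulr_gt0 ?addr_gt0 ?invr_gt0 //; lra.
have eta_gt0 : 0 < eps * thr by rewrite mulr_gt0 //; case/andP: thr_bnd.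
rewrite probE_compl lerD2l lerN2.
have dev := est_val_dev p01 C_bnd m_gt0 eta_gt0 L_gt0 (p_bnd i).
apply: le_trans (probE_mono p01 _) (le_trans dev _).
  by move=> s; apply: contraR; rewrite -ltNge; apply: additive_error_guarantees.
exact: sample_budget X2 delta_gt0 eps_gt0 m_large.
Qed.
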